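(* Let $\bm{\lambda}=\{\bm{\lambda}_k\}_{k\in\mathcal{K}}$, $\beta>0$ and $\epsilon>0$ be given. Suppose the ADMM iterates $\{\bm{x}_0^t,\{\bm{x}_k^t,(\bm{x}_k^{\text{base}})^t\}_{k\in\mathcal{K}},\{\bm{z}_k^t\}_{k\in\mathcal{K}}\}_{t\in\mathbb{N}}$ satisfy: (descent in base case update) $\bm{x}_0^{t+1}$ is a stationary point of the $\bm{x}_0$-subproblem and $f_0(\bm{x}_0^{t+1})+\sum_{k\in\mathcal{K}}\big(\langle\bm{y}_k^t,\bm{x}_0^{t+1}\rangle+\tfrac{\rho}{2}\|\bm{x}_0^{t+1}-(\bm{x}_k^{\text{base}})^t+\bm{z}_k^t\|^2\big)\le f_0(\bm{x}_0^{t})+\sum_{k\in\mathcal{K}}\big(\langle\bm{y}_k^t,\bm{x}_0^{t}\rangle+\tfrac{\rho}{2}\|\bm{x}_0^{t}-(\bm{x}_k^{\text{base}})^t+\bm{z}_k^t\|^2\big)$; (descent in contingency update) there is $\gamma>0$ such that for all $k\in\mathcal{K}$, $(\bm{x}_k^{t+1},(\bm{x}_k^{\text{base}})^{t+1})$ is a stationary point of the $k$-th contingency subproblem and $f_k(\bm{x}_k^{t+1})-\langle\bm{y}_k^t,(\bm{x}_k^{\text{base}})^{t+1}\rangle+\tfrac{\rho}{2}\|\bm{x}_0^{t+1}-(\bm{x}_k^{\text{base}})^{t+1}+\bm{z}_k^t\|^2\le f_k(\bm{x}_k^{t})-\langle\bm{y}_k^t,(\bm{x}_k^{\text{base}})^{t}\rangle+\tfrac{\rho}{2}\|\bm{x}_0^{t+1}-(\bm{x}_k^{\text{base}})^{t}+\bm{z}_k^t\|^2-\gamma\beta\|(\bm{x}_k^{\text{base}})^{t+1}-(\bm{x}_k^{\text{base}})^{t}\|^2$.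 Then ADMM finds an $\epsilon$-stationary solution of the augmented Lagrangian relaxation problem (in the sense defined in the context) in at most $$T\le\left\lceil\frac{2\rho^2|\mathcal{K}|\,(\overline{L}(\bm{\lambda},\beta)-\underline{L}(\bm{\lambda},\beta))}{\min\{\gamma\beta,(\beta+\rho)/2-\beta^2/\rho\}}\cdot\frac{1}{\epsilon^2}\right\rceil$$ iterations, where $\overline{L}(\bm{\lambda},\beta):=f_0(\bm{x}_0^0)+\sum_{k\in\mathcal{K}}\big(f_k(\bm{x}_k^0)+\langle\bm{\lambda}_k,\bm{z}_k^0\rangle+\tfrac{\beta}{2}\|\bm{z}_k^0\|^2\big)+\sum_{k\in\mathcal{K}}\big(\langle\bm{y}_k^0,\bm{x}_0^0-(\bm{x}_k^{\text{base}})^0+\bm{z}_k^0\rangle+\tfrac{\rho}{2}\|\bm{x}_0^0-(\bm{x}_k^{\text{base}})^0+\bm{z}_k^0\|^2\big)$ and $\underline{L}(\bm{\lambda},\beta):=\min\{\sum_{g\in\mathcal{G}}c_g(p_{g0}):p_{g0}\in[\underline{p}_g,\overline{p}_g]\ \forall g\in\mathcal{G}\}-\|\bm{\lambda}\|^2/\beta$.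
   Context: Setting (smoothed two-stage SC-ACOPF): $\mathcal{G}$ is the set of generators, $\mathcal{K}$ the set of contingencies; $\bm{x}_0$ collects base case variables, $\bm{x}_k$ the variables of contingency $k$, and $\bm{x}_k^{\text{base}}$ is contingency $k$'s copy of $\bm{x}_0$. $X_0$ is the (closed) base case feasible set and $X_k$ the (closed, approximated) feasible set of $(\bm{x}_k,\bm{x}_k^{\text{base}})$. The costs are $f_0(\bm{x}_0)=\sum_{g\in\mathcal{G}}c_g(p_{g0})+\delta c_0^\sigma$ and $f_k(\bm{x}_k)=(1-\delta)\frac{1}{|\mathcal{K}|}c_k^\sigma$, where each $c_g$ is a convex piecewise linear increasing generation cost of base case active power $p_{g0}\in[\underline{p}_g,\overline{p}_g]$ and $c_k^\sigma\ge 0$ is a penalty cost (sum of convex piecewise linear increasing functions of nonnegative slack variables). Augmented Lagrangian relaxation (ALR) problem: minimize $f_0(\bm{x}_0)+\sum_{k\in\mathcal{K}}\big(f_k(\bm{x}_k)+\langle\bm{\lambda}_k,\bm{z}_k\rangle+\frac{\beta}{2}\|\bm{z}_k\|^2\big)$ subject to $\bm{x}_0-\bm{x}_k^{\text{base}}+\bm{z}_k=0$, $\bm{x}_0\in X_0$, $(\bm{x}_k,\bm{x}_k^{\text{base}})\in X_k$ for all $k\in\mathcal{K}$. ADMM is run with penalty $\rho=\tau\beta$, $\tau>1$, $\beta>1$, starting from $\bm{x}_0^0\in X_0$, $(\bm{x}_k^0,(\bm{x}_k^{\text{base}})^0)\in X_k$ and $(\bm{z}_k^0,\bm{y}_k^0)$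 with $\bm{\lambda}_k+\beta\bm{z}_k^0+\bm{y}_k^0=0$, and updates $\bm{x}_0^{t+1}=\operatorname{argmin}_{\bm{x}_0\in X_0} f_0(\bm{x}_0)+\sum_{k}\big(\langle\bm{y}_k^t,\bm{x}_0\rangle+\frac{\rho}{2}\|\bm{x}_0-(\bm{x}_k^{\text{base}})^t+\bm{z}_k^t\|^2\big)$; $(\bm{x}_k^{t+1},(\bm{x}_k^{\text{base}})^{t+1})=\operatorname{argmin}_{(\bm{x}_k,\bm{x}_k^{\text{base}})\in X_k} f_k(\bm{x}_k)-\langle\bm{y}_k^t,\bm{x}_k^{\text{base}}\rangle+\frac{\rho}{2}\|\bm{x}_0^{t+1}-\bm{x}_k^{\text{base}}+\bm{z}_k^t\|^2$; $\bm{z}_k^{t+1}=\frac{1}{\beta+\rho}\big(\rho((\bm{x}_k^{\text{base}})^{t+1}-\bm{x}_0^{t+1})-\bm{\lambda}_k-\bm{y}_k^t\big)$; $\bm{y}_k^{t+1}=\bm{y}_k^t+\rho(\bm{x}_0^{t+1}-(\bm{x}_k^{\text{base}})^{t+1}+\bm{z}_k^{t+1})$. $\epsilon$-stationarity for the ALR problem: $(\bm{x}_0,\{\bm{x}_k,\bm{x}_k^{\text{base}}\},\{\bm{z}_k\})$ is $\epsilon$-stationary if there exist $\{\bm{y}_k\}$, $\bm{d}_0\in\partial f_0(\bm{x}_0)+\sum_k\bm{y}_k+\mathcal{N}_{X_0}(\bm{x}_0)$, and $\bm{d}_k\in[\tilde{\nabla}f_k(\bm{x}_k);-\bm{y}_k]+\mathcal{N}_{X_k}(\bm{x}_k,\bm{x}_k^{\text{base}})$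 with $\tilde{\nabla}f_k(\bm{x}_k)\in\partial f_k(\bm{x}_k)$, such that $0=\bm{\lambda}_k+\beta\bm{z}_k+\bm{y}_k$ for all $k$, and with $\bm{s}_k:=\bm{x}_0-\bm{x}_k^{\text{base}}+\bm{z}_k$ we have $\max\{\|\bm{d}_0\|,\|\bm{d}_k\|,\|\bm{s}_k\|:k\in\mathcal{K}\}\le\epsilon$. Here $\partial$ is the general (limiting) subdifferential and $\mathcal{N}$ the general normal cone of variational analysis. *)

From HB Require Import structures.
From mathcomp Require Import all_boot all_order all_algebra.
From mathcomp Require Import all_classical all_reals all_analysis.
Set Implicit Arguments. Unset Strict Implicit. Unset Printing Implicit Defensive.
Import Order.TTheory GRing.Theory Num.Theory.
Local Open Scope classical_set_scope.
Local Open Scope ring_scope.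

Section Defs.
Variable R : realType.

Definition vec (n : nat) := 'I_n -> R.

Definition vdot n (u v : vec n) : R := \sum_(i < n) u i * v i.
Definition vnorm n (u : vec n) : R := Num.sqrt (vdot u u).
Definition vadd n (u v : vec n) : vec n := fun i => u i + v i.
Definition vsub n (u v : vec n) : vec n := fun i => u i - v i.
Definition vopp n (u : vec n) : vec n := fun i => - u i.
Definition vscale n (a : R) (u : vec n) : vec n := fun i => a * u i.
Definition vzero n : vec n := fun _ => 0.
Definition vcat m n (x : vec m) (y : vec n) : vec (m + n) :=
  fun i => match fintype.split i with inl a => x a | inr b => y b end.

Definition vconv n (xs : nat -> vec n) (x : vec n) : Prop :=
  forall e, 0 < e -> exists N, forall j, (N <= j)%N -> vnorm (vsub (xs j) x) <= e.
Definition rconv (us : nat -> R) (u : R) : Prop :=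
  forall e, 0 < e -> exists N, forall j, (N <= j)%N -> `|us j - u| <= e.

Definition vclosed n (C : set (vec n)) : Prop :=
  forall (xs : nat -> vec n) x, (forall j, C (xs j)) -> vconv xs x -> C x.

(* Regular (Frechet) normal cone, Rockafellar-Wets Def. 6.3 *)
Definition reg_normal n (C : set (vec n)) (x : vec n) : set (vec n) :=
  [set v | C x /\ forall e, 0 < e -> exists2 d, 0 < d &
      forall y, C y -> vnorm (vsub y x) <= d ->
        vdot v (vsub y x) <= e * vnorm (vsub y x)].
(* General (limiting) normal cone, Rockafellar-Wets Def. 6.3 *)
Definition normal_cone n (C : set (vec n)) (x : vec n) : set (vec n) :=
  [set v | C x /\ exists (xs vs : nat -> vec n),
      (forall j, C (xs j)) /\ vconv xs x /\ vconv vs v /\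
      (forall j, reg_normal C (xs j) (vs j))].

(* Regular (Frechet) subdifferential, Rockafellar-Wets Def. 8.3 *)
Definition reg_subdiff n (f : vec n -> R) (x : vec n) : set (vec n) :=
  [set v | forall e, 0 < e -> exists2 d, 0 < d &
      forall y, vnorm (vsub y x) <= d ->
        f x + vdot v (vsub y x) - e * vnorm (vsub y x) <= f y].
(* General (limiting) subdifferential, Rockafellar-Wets Def. 8.3 *)
Definition subdiff n (f : vec n -> R) (x : vec n) : set (vec n) :=
  [set v | exists (xs vs : nat -> vec n),
      vconv xs x /\ rconv (fun j => f (xs j)) (f x) /\ vconv vs v /\
      (forall j, reg_subdiff f (xs j) (vs j))].

Definition cvx_pwl_incr (c : R -> R) : Prop :=
  (exists s : seq (R * R), s != [::] /\
     forall p, (forall ab, ab \in s -> ab.1 * p + ab.2 <= c p) /\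
               (exists2 ab, ab \in s & c p = ab.1 * p + ab.2)) /\
  (forall p q, p <= q -> c p <= c q).

(* Cost functions.
   f_0(x_0) = sum_g c_g(p_{g0}) + delta * c_0^sigma(x_0),
   where p_{g0} = x_0 (pidx g);
   f_k(x_k) = (1 - delta) / |K| * c_k^sigma(x_k). *)
Definition f0 (G : finType) n0 (pidx : G -> 'I_n0) (c : G -> R -> R)
  (delta : R) (c0s : vec n0 -> R) (x0 : vec n0) : R :=
  \sum_(g : G) c g (x0 (pidx g)) + delta * c0s x0.

Definition fk (K : finType) m (delta : R) (cks : vec m -> R) (xk : vec m) : R :=
  (1 - delta) * (#|K|%:R)^-1 * cks xk.

Definition gen_min (G : finType) (c : G -> R -> R) (pl pu : G -> R) : R :=
  inf [set \sum_(g : G) c g (p g) | p in [set p : G -> R | forall g, pl g <= p g <= pu g]].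

(* First-order stationarity of the x_0-subproblem
     min_{x in X0} F0(x) + sum_k (<y_k, x> + rho/2 ||x - xb_k + z_k||^2):
   0 in dF0(x) + sum_k (y_k + rho (x - xb_k + z_k)) + N_{X0}(x). *)
Definition sub0_stationary (K : finType) n0 (F0 : vec n0 -> R) (X0 : set (vec n0))
  (y xb z : K -> vec n0) (rho : R) (x : vec n0) : Prop :=
  exists2 g, subdiff F0 x g & exists2 nv, normal_cone X0 x nv &
    forall i, g i + \sum_(k : K) (y k i + rho * (x i - xb k i + z k i)) + nv i = 0.

(* First-order stationarity of the k-th contingency subproblem
     min_{(u, w) in Xk} Fk(u) - <y_k, w> + rho/2 ||x0 - w + z_k||^2:
   0 in [dFk(u); -y_k - rho (x0 - w + z_k)] + N_{Xk}(u, w). *)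
Definition subk_stationary m n0 (Fk : vec m -> R) (Xk : set (vec (m + n0)))
  (yk zk x0 : vec n0) (rho : R) (u : vec m) (w : vec n0) : Prop :=
  exists2 g, subdiff Fk u g & exists2 nv, normal_cone Xk (vcat u w) nv &
    forall i, vcat g (fun j => - yk j - rho * (x0 j - w j + zk j)) i + nv i = 0.

Definition eps_stationary (G K : finType) n0 (m : K -> nat)
  (pidx : G -> 'I_n0) (c : G -> R -> R) (delta : R)
  (c0s : vec n0 -> R) (cks : forall k, vec (m k) -> R)
  (X0 : set (vec n0)) (Xk : forall k, set (vec (m k + n0)))
  (lam : K -> vec n0) (beta eps : R)
  (x0 : vec n0) (xk : forall k, vec (m k)) (xb z : K -> vec n0) : Prop :=
  exists (y : K -> vec n0),
    [/\ (forall k i, lam k i + beta * z k i + y k i = 0),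
     (exists2 g0, subdiff (f0 pidx c delta c0s) x0 g0 &
       exists2 nv0, normal_cone X0 x0 nv0 &
         vnorm (fun i => g0 i + \sum_(k : K) y k i + nv0 i) <= eps),
     (forall k, exists2 gk, subdiff (fk K delta (cks k)) (xk k) gk &
       exists2 nvk, normal_cone (Xk k) (vcat (xk k) (xb k)) nvk &
         vnorm (fun i => vcat gk (vopp (y k)) i + nvk i) <= eps) &
     (forall k, vnorm (fun i => x0 i - xb k i + z k i) <= eps)].

Definition L_upper (G K : finType) n0 (m : K -> nat)
  (pidx : G -> 'I_n0) (c : G -> R -> R) (delta : R)
  (c0s : vec n0 -> R) (cks : forall k, vec (m k) -> R)
  (lam : K -> vec n0) (beta rho : R)
  (x0 : vec n0) (xk : forall k, vec (m k)) (xb z y : K -> vec n0) : R :=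
  f0 pidx c delta c0s x0
  + \sum_(k : K) (fk K delta (cks k) (xk k) + vdot (lam k) (z k)
                  + beta / 2 * vnorm (z k) ^+ 2)
  + \sum_(k : K) (vdot (y k) (fun i => x0 i - xb k i + z k i)
                  + rho / 2 * vnorm (fun i => x0 i - xb k i + z k i) ^+ 2).

Definition L_lower (G K : finType) n0 (c : G -> R -> R) (pl pu : G -> R)
  (lam : K -> vec n0) (beta : R) : R :=
  gen_min c pl pu - (\sum_(k : K) vnorm (lam k) ^+ 2) / beta.

End Defs.

From HB Require Import structures.
From mathcomp Require Import all_boot all_order all_algebra.
From mathcomp Require Import all_classical all_reals all_analysis.
From mathcomp Require Import ring lra.
Set Implicit Arguments. Unset Strict Implicit. Unset Printing Implicit Defensive.
Import Order.TTheory GRing.Theory Num.Theory.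
Local Open Scope classical_set_scope.
Local Open Scope ring_scope.

(* The augmented Lagrangian L(x0, xk, xb, z, y) of the ALR problem is a Lyapunov
   function of ADMM.  The x0-update does not increase it, the contingency updates
   decrease it by gamma beta |xb' - xb|^2, and, since the dual updates preserve
   y = - lambda - beta z, the (z, y)-update decreases it by
   ((beta + rho)/2 - beta^2/rho) |z' - z|^2.  Completing the square in z bounds L
   from below by L_lower, so within the first T iterations some step has squared
   increments at most eps^2 / (2 rho^2 |K|).  The optimality conditions of the
   subproblems of that step then make the next iterate eps-stationary with the
   multipliers y^(t+1), its consensus residual being (beta/rho) (z^t - z^(t+1)). *)

Section RealSums.
Variable R : realFieldType.

Lemma sqr_sum_le_card (I : finType) (a : I -> R) :
  (\sum_i a i) ^+ 2 <= #|I|%:R * \sum_i a i ^+ 2.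
Proof.
have spread_ge0 : 0 <= \sum_i \sum_j (a i - a j) ^+ 2.
  by do 2!apply: sumr_ge0 => ? _; exact: sqr_ge0.
have spreadE : \sum_i \sum_j (a i - a j) ^+ 2 =
    2 * (#|I|%:R * \sum_i a i ^+ 2) - 2 * (\sum_i a i) ^+ 2.
  transitivity (\sum_i (#|I|%:R * a i ^+ 2 - 2 * a i * \sum_j a j + \sum_j a j ^+ 2)).
    apply: eq_bigr => i _.
    rewrite (eq_bigr (fun j => a i ^+ 2 - 2 * a i * a j + a j ^+ 2)) => [|j _]; last by ring.
    by rewrite !big_split /= sumrN sumr_const -/#|I| -mulr_natl -mulr_sumr; ring.
  rewrite !big_split /= sumrN -mulr_sumr -mulr_suml -mulr_sumr sumr_const -/#|I| -mulr_natl.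
  by rewrite expr2; ring.
lra.
Qed.

Lemma ler_sum_term (I : finType) (F : I -> R) k :
  (forall i, 0 <= F i) -> F k <= \sum_i F i.
Proof. by move=> F_ge0; rewrite (bigD1 k) //= lerDl sumr_ge0. Qed.

Lemma sum_descent_le (L d : nat -> R) :
  (forall t, L t.+1 + d t <= L t) -> forall T, L T + \sum_(t < T) d t <= L 0%N.
Proof.
move=> desc; elim=> [|T IH]; first by rewrite big_ord0 addr0.
by rewrite big_ord_recr /=; have := desc T; lra.
Qed.

Lemma exists_le_of_sum_le (a : nat -> R) (B e : R) (T : nat) :
  (0 < T)%N -> \sum_(t < T) a t <= B -> B <= T%:R * e ->
  exists2 t, (t < T)%N & a t <= e.
Proof.
move=> T0 sumB BTe.
case: (pselect (exists2 t, (t < T)%N & a t <= e)) => // none; exfalso.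
have : \sum_(0 <= t < T) e < \sum_(0 <= t < T) a t.
  apply: ltr_sum_nat => // t /andP[_ tT].
  by rewrite ltNge; apply/negP => ate; apply: none; exists t.
rewrite sumr_const_nat subn0 -mulr_natl big_mkord.
lra.
Qed.

Lemma exists_small_decrease (L d : nat -> R) (Lmin M A e : R) (T : nat) :
  (forall t, L t.+1 + M * d t <= L t) -> (forall t, Lmin <= L t) ->
  0 < M -> 0 <= A -> 0 < e -> (0 < T)%N ->
  A * (L 0%N - Lmin) / M / e ^+ 2 <= T%:R ->
  exists2 t, (t < T)%N & A * d t <= e ^+ 2.
Proof.
move=> descent lower M_gt0 A_ge0 e_gt0 T_gt0 T_ge.
apply: (exists_le_of_sum_le (B := A * (L 0%N - Lmin) / M)) => //.
  rewrite -mulr_sumr -mulrA ler_wpM2l // ler_pdivlMr // mulrC mulr_sumr.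
  by have := sum_descent_le descent T; have := lower T; lra.
by rewrite -ler_pdivrMr ?exprn_gt0.
Qed.

End RealSums.

Lemma exists_nat_max1_ceil (R : archiRealFieldType) (Q : R) :
  exists T : nat, [/\ (0 < T)%N, T%:Z = Num.max 1 (Num.ceil Q) & Q <= T%:R].
Proof.
set z := Num.max 1 (Num.ceil Q).
have z0 : 0 <= z by rewrite le_max ler01.
exists (absz z); split; first by rewrite -lez_nat gez0_abs // le_max lexx.
  by rewrite gez0_abs.
rewrite natr_absz ger0_norm //; apply: le_trans (ceil_ge Q) _.
by rewrite ler_int le_max lexx orbT.
Qed.

Section Vectors.
Variables (R : realType) (n : nat).
Implicit Types (u v w : vec R n).

Lemma vdot_ge0 u : 0 <= vdot u u.
Proof. by apply: sumr_ge0 => i _; rewrite -expr2 sqr_ge0. Qed.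

Lemma vnorm_sqr u : vnorm u ^+ 2 = vdot u u.
Proof. by rewrite sqr_sqrtr // vdot_ge0. Qed.

Lemma vnorm_le u e : 0 <= e -> vdot u u <= e ^+ 2 -> vnorm u <= e.
Proof.
by move=> e0 ue; rewrite -(ger0_norm e0) -sqrtr_sqr ler_sqrt // sqr_ge0.
Qed.

Lemma vdotBDr w u v x :
  vdot w (fun i => u i - v i + x i) = vdot w u - vdot w v + vdot w x.
Proof.
by rewrite /vdot -sumrB -big_split; apply: eq_bigr => i _ /=; ring.
Qed.

End Vectors.

Section Concatenation.
Variables (R : realType) (m n : nat).

Lemma vcat_lshift (u : vec R m) (v : vec R n) i : vcat u v (lshift n i) = u i.
Proof. by rewrite /vcat (unsplitK (inl i) : fintype.split (lshift n i) = inl i). Qed.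

Lemma vcat_rshift (u : vec R m) (v : vec R n) i : vcat u v (rshift m i) = v i.
Proof. by rewrite /vcat (unsplitK (inr i) : fintype.split (rshift m i) = inr i). Qed.

Lemma vdot_vcat (u u' : vec R m) (v v' : vec R n) :
  vdot (vcat u v) (vcat u' v') = vdot u u' + vdot v v'.
Proof.
rewrite /vdot big_split_ord /=.
by congr (_ + _); apply: eq_bigr => i _; rewrite ?vcat_lshift ?vcat_rshift.
Qed.

End Concatenation.

Section CouplingCoordinate.
Variables (R : realFieldType) (beta rho : R).

Definition alr_coupling_coord (l z y s : R) : R :=
  l * z + beta / 2 * z ^+ 2 + (y * s + rho / 2 * s ^+ 2).

Lemma alr_coupling_coord_ge l z s : 0 < beta <= rho ->
  - (l ^+ 2 / beta) <= alr_coupling_coord l z (- l - beta * z) s.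
Proof.
case/andP=> beta_gt0 beta_le_rho; rewrite -subr_ge0 opprK.
have -> : alr_coupling_coord l z (- l - beta * z) s + l ^+ 2 / beta =
    (l + beta * (z - s)) ^+ 2 / (2 * beta) + l ^+ 2 / (2 * beta)
    + (rho - beta) / 2 * s ^+ 2.
  by rewrite /alr_coupling_coord; field; rewrite gt_eqF.
have beta2_gt0 : 0 < 2 * beta by rewrite mulr_gt0.
rewrite !addr_ge0 // ?divr_ge0 ?sqr_ge0 ?(ltW beta2_gt0) //.
by rewrite mulr_ge0 ?sqr_ge0 // divr_ge0 // subr_ge0.
Qed.

Section DualUpdate.
Variables (l z y a b z' : R).
Hypotheses (brho_neq0 : beta + rho != 0) (rho_neq0 : rho != 0).
Hypothesis y_def : y = - l - beta * z.
Hypothesis z'_def : z' = (beta + rho)^-1 * (rho * (b - a) - l - y).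

Lemma dual_update_multiplier : y + rho * (a - b + z') = - l - beta * z'.
Proof. by rewrite z'_def y_def; field. Qed.

Lemma dual_update_residual : a - b + z' = beta / rho * (z - z').
Proof. by rewrite z'_def y_def; field; rewrite brho_neq0 rho_neq0. Qed.

Lemma dual_update_decrease :
  alr_coupling_coord l z' (- l - beta * z') (a - b + z')
    + ((beta + rho) / 2 - beta ^+ 2 / rho) * (z' - z) ^+ 2
  = alr_coupling_coord l z y (a - b + z).
Proof. by rewrite /alr_coupling_coord z'_def y_def; field; rewrite brho_neq0 rho_neq0. Qed.

End DualUpdate.

End CouplingCoordinate.

Lemma descent_rate_gt0 (R : realFieldType) (gamma beta rho : R) :
  0 < gamma -> 0 < beta -> beta < rho ->
  0 < Num.min (gamma * beta) ((beta + rho) / 2 - beta ^+ 2 / rho).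
Proof.
move=> gamma_gt0 beta_gt0 beta_lt_rho.
have : beta ^+ 2 / rho < beta.
  by rewrite ltr_pdivrMr ?expr2 ?ltr_pM2l //; apply: lt_trans beta_lt_rho.
by rewrite lt_min mulr_gt0 //=; lra.
Qed.

Lemma gen_min_le (R : realType) (G : finType) (c : G -> R -> R) (pl pu p : G -> R) :
  (forall g, {homo c g : a b / a <= b}) -> (forall g, pl g <= p g <= pu g) ->
  gen_min c pl pu <= \sum_g c g (p g).
Proof.
move=> c_homo p_bounds; apply: ge_inf; last by exists p.
exists (\sum_g c g (pl g)) => _ [q q_bounds <-].
by apply: ler_sum => g _; case/andP: (q_bounds g) => /c_homo.
Qed.

Lemma fk_ge0 (R : realType) (K : finType) m (delta : R) (cks : vec R m -> R) x :
  delta <= 1 -> 0 <= cks x -> 0 <= fk K delta cks x.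
Proof. by move=> delta_le1 cks_ge0; rewrite !mulr_ge0 ?invr_ge0 ?subr_ge0. Qed.

Section AugmentedLagrangian.
Variables (R : realType) (G K : finType) (n0 : nat) (m : K -> nat).
Variables (pidx : G -> 'I_n0) (c : G -> R -> R) (delta : R).
Variables (c0s : vec R n0 -> R) (cks : forall k, vec R (m k) -> R).
Variables (lam : K -> vec R n0) (beta rho : R).
(* Under [Set Implicit Arguments] the index k of such families would be implicit. *)
Arguments cks : clear implicits.

Local Notation F0 := (f0 pidx c delta c0s).
Local Notation L := (L_upper pidx c delta c0s cks lam beta rho).

Definition alr_coupling (l z y s : vec R n0) : R :=
  vdot l z + beta / 2 * vnorm z ^+ 2 + (vdot y s + rho / 2 * vnorm s ^+ 2).

Lemma alr_couplingE l z y s :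
  alr_coupling l z y s = \sum_i alr_coupling_coord beta rho (l i) (z i) (y i) (s i).
Proof.
rewrite /alr_coupling !vnorm_sqr /vdot !mulr_sumr -!big_split /=.
by apply: eq_bigr => i _; rewrite /alr_coupling_coord !expr2.
Qed.

Lemma L_upperE x0 xk xb z y : L x0 xk xb z y =
  F0 x0 + \sum_(k : K) (fk K delta (cks k) (xk k) + alr_coupling (lam k) (z k) (y k)
                                  (fun i => x0 i - xb k i + z k i)).
Proof.
rewrite /L_upper -addrA -big_split /=; congr (_ + _).
by apply: eq_bigr => k _; rewrite /alr_coupling !addrA.
Qed.

Lemma alr_coupling_ge l z y s : 0 < beta <= rho ->
  (forall i, y i = - l i - beta * z i) ->
  - (vnorm l ^+ 2 / beta) <= alr_coupling l z y s.
Proof.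
move=> beta_rho y_def; rewrite alr_couplingE vnorm_sqr /vdot mulr_suml -sumrN.
by apply: ler_sum => i _; rewrite y_def -expr2 alr_coupling_coord_ge.
Qed.

Lemma L_lower_le_L_upper pl pu x0 xk xb z y :
  (forall g, {homo c g : a b / a <= b}) -> (forall g, pl g <= x0 (pidx g) <= pu g) ->
  0 <= delta <= 1 -> 0 <= c0s x0 -> (forall k, 0 <= cks k (xk k)) ->
  0 < beta <= rho -> (forall k i, y k i = - lam k i - beta * z k i) ->
  L_lower c pl pu lam beta <= L x0 xk xb z y.
Proof.
move=> c_homo x0_bounds /andP[delta_ge0 delta_le1] c0s_ge0 cks_ge0 beta_rho y_def.
have F0_ge : gen_min c pl pu <= F0 x0.
  by rewrite -[gen_min _ _ _]addr0 lerD ?gen_min_le ?mulr_ge0.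
have : \sum_k - (vnorm (lam k) ^+ 2 / beta) <= \sum_(k : K) (fk K delta (cks k) (xk k)
    + alr_coupling (lam k) (z k) (y k) (fun i => x0 i - xb k i + z k i)).
  apply: ler_sum => k _; rewrite -[X in X <= _]add0r.
  by rewrite lerD ?fk_ge0 ?alr_coupling_ge.
rewrite L_upperE /L_lower sumrN -mulr_suml; lra.
Qed.

Lemma L_upper_base_step x0 x0' xk xb z y :
  F0 x0' + \sum_k (vdot (y k) x0' + rho / 2 * vnorm (fun i => x0' i - xb k i + z k i) ^+ 2)
  <= F0 x0 + \sum_k (vdot (y k) x0 + rho / 2 * vnorm (fun i => x0 i - xb k i + z k i) ^+ 2) ->
  L x0' xk xb z y <= L x0 xk xb z y.
Proof.
have L_x0E x : L x xk xb z y =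
    F0 x + \sum_k (vdot (y k) x + rho / 2 * vnorm (fun i => x i - xb k i + z k i) ^+ 2)
    + \sum_(k : K) (fk K delta (cks k) (xk k) + vdot (lam k) (z k)
                   + beta / 2 * vnorm (z k) ^+ 2 + vdot (y k) (z k) - vdot (y k) (xb k)).
  rewrite /L_upper; under [X in _ + X = _]eq_bigr do rewrite vdotBDr.
  rewrite !big_split /= !sumrN; lra.
by move=> F0_descent; rewrite !L_x0E; lra.
Qed.

Lemma L_upper_contingency_step x0 xk xk' xb xb' z y (d : K -> R) :
  (forall k, fk K delta (cks k) (xk' k) - vdot (y k) (xb' k)
             + rho / 2 * vnorm (fun i => x0 i - xb' k i + z k i) ^+ 2
     <= fk K delta (cks k) (xk k) - vdot (y k) (xb k)
        + rho / 2 * vnorm (fun i => x0 i - xb k i + z k i) ^+ 2 - d k) ->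
  L x0 xk' xb' z y + \sum_k d k <= L x0 xk xb z y.
Proof.
move=> Fk_descent; rewrite !L_upperE -addrA lerD2l -big_split /=.
by apply: ler_sum => k _; have := Fk_descent k; rewrite /alr_coupling !vdotBDr; lra.
Qed.

Lemma L_upper_dual_step x0 xk xb z z' y y' :
  beta + rho != 0 -> rho != 0 ->
  (forall k i, y k i = - lam k i - beta * z k i) ->
  (forall k i, z' k i = (beta + rho)^-1 * (rho * (xb k i - x0 i) - lam k i - y k i)) ->
  (forall k i, y' k i = - lam k i - beta * z' k i) ->
  L x0 xk xb z' y'
    + ((beta + rho) / 2 - beta ^+ 2 / rho) * \sum_k vnorm (fun i => z' k i - z k i) ^+ 2
  = L x0 xk xb z y.
Proof.
move=> brho_neq0 rho_neq0 y_def z'_def y'_def.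
rewrite !L_upperE -addrA mulr_sumr -big_split /=; congr (_ + _).
apply: eq_bigr => k _; rewrite -addrA; congr (_ + _).
rewrite !alr_couplingE vnorm_sqr /vdot mulr_sumr -big_split; apply: eq_bigr => i _ /=.
by rewrite y'_def -expr2 (dual_update_decrease _ _ (y_def k i) (z'_def k i)).
Qed.

End AugmentedLagrangian.

Lemma sqrB_le_2sqrD (R : realFieldType) (a b : R) : (a - b) ^+ 2 <= 2 * (a ^+ 2 + b ^+ 2).
Proof.
rewrite -subr_ge0 (_ : _ - _ = (a + b) ^+ 2) ?sqr_ge0 //.
by rewrite !expr2; ring.
Qed.

Lemma sub0_stationary_feasible (R : realType) (K : finType) n (F : vec R n -> R)
    (X : set (vec R n)) (y xb z : K -> vec R n) (rho : R) (x : vec R n) :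
  sub0_stationary F X y xb z rho x -> X x.
Proof. by case=> g _ [nv []]. Qed.

Lemma subk_stationary_feasible (R : realType) m n (F : vec R m -> R)
    (X : set (vec R (m + n))) (yk zk x0 : vec R n) (rho : R) (u : vec R m) (w : vec R n) :
  subk_stationary F X yk zk x0 rho u w -> X (vcat u w).
Proof. by case=> g _ [nv []]. Qed.

Section StationarityBounds.
Variables (R : realType) (rho eps : R).
Hypothesis eps_ge0 : 0 <= eps.

Lemma sub0_stationary_bound (K : finType) n (F : vec R n -> R) (X : set (vec R n))
    (x' : vec R n) (xb z y xb' z' y' : K -> vec R n) :
  (forall k i, y' k i = y k i + rho * (x' i - xb' k i + z' k i)) ->
  sub0_stationary F X y xb z rho x' ->
  2 * rho ^+ 2 * #|K|%:R * \sum_k (vnorm (fun i => xb' k i - xb k i) ^+ 2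
                                  + vnorm (fun i => z' k i - z k i) ^+ 2) <= eps ^+ 2 ->
  exists2 g, subdiff F x' g & exists2 nv, normal_cone X x' nv &
    vnorm (fun i => g i + \sum_k y' k i + nv i) <= eps.
Proof.
move=> y'_def [g g_sub [nv nv_normal stat]] small.
exists g => //; exists nv => //; apply: vnorm_le => //; apply: le_trans small.
pose w k i := (z' k i - z k i) - (xb' k i - xb k i).
have resE i : g i + \sum_k y' k i + nv i = rho * \sum_k w k i.
  rewrite (eq_bigr (fun k => y k i + rho * (x' i - xb k i + z k i) + rho * w k i)) => [|k _].
    by rewrite big_split /= -mulr_sumr; have := stat i; lra.
  by rewrite y'_def /w; ring.
have sumE : \sum_k (vnorm (fun i => xb' k i - xb k i) ^+ 2
                    + vnorm (fun i => z' k i - z k i) ^+ 2)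
    = \sum_i \sum_k ((xb' k i - xb k i) ^+ 2 + (z' k i - z k i) ^+ 2).
  rewrite exchange_big; apply: eq_bigr => k _.
  by rewrite !vnorm_sqr /vdot -big_split; apply: eq_bigr => i _; rewrite !expr2.
rewrite sumE mulr_sumr /vdot; apply: ler_sum => i _ /=.
rewrite resE -expr2 exprMn.
apply: le_trans (ler_wpM2l (sqr_ge0 rho) (sqr_sum_le_card _)) _.
have w_le : \sum_k w k i ^+ 2 <= 2 * \sum_k ((xb' k i - xb k i) ^+ 2 + (z' k i - z k i) ^+ 2).
  by rewrite mulr_sumr; apply: ler_sum => k _; rewrite addrC sqrB_le_2sqrD.
by have := ler_wpM2l (mulr_ge0 (sqr_ge0 rho) (ler0n _ #|K|)) w_le; nra.
Qed.

Lemma subk_stationary_bound m n (F : vec R m -> R) (X : set (vec R (m + n)))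
    (x' yk zk w y' z' : vec R n) (u : vec R m) :
  (forall i, y' i = yk i + rho * (x' i - w i + z' i)) ->
  subk_stationary F X yk zk x' rho u w ->
  rho ^+ 2 * vnorm (fun i => z' i - zk i) ^+ 2 <= eps ^+ 2 ->
  exists2 g, subdiff F u g & exists2 nv, normal_cone X (vcat u w) nv &
    vnorm (fun i => vcat g (vopp y') i + nv i) <= eps.
Proof.
move=> y'_def [g g_sub [nv nv_normal stat]] small.
exists g => //; exists nv => //; apply: vnorm_le => //; apply: le_trans small.
have -> : (fun i => vcat g (vopp y') i + nv i)
    = vcat (@vzero R m) (fun j => rho * (zk j - z' j)).
  apply/funext => i; have := stat i.
  by rewrite /vcat /vopp /vzero; case: (fintype.split i) => j /=; rewrite ?y'_def; lra.
rewrite vdot_vcat vnorm_sqr /vdot big1 ?add0r ?mulr_sumr => [|i _]; last by rewrite mul0r.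
by apply: ler_sum => i _; nra.
Qed.

Lemma scaled_increment_bound n (a : R) (z z' : vec R n) :
  a ^+ 2 <= rho ^+ 2 -> rho ^+ 2 * vnorm (fun i => z' i - z i) ^+ 2 <= eps ^+ 2 ->
  vnorm (fun i => a * (z i - z' i)) <= eps.
Proof.
move=> a_le small; apply: vnorm_le => //; apply: le_trans small.
rewrite vnorm_sqr /vdot mulr_sumr; apply: ler_sum => i _.
by have := ler_wpM2r (sqr_ge0 (z i - z' i)) a_le; nra.
Qed.

End StationarityBounds.

Lemma admm_multiplier_invariant (R : realType) (K : finType) n (lam : K -> vec R n)
    (beta rho : R) (x0 : nat -> vec R n) (xb z y : nat -> K -> vec R n) :
  beta + rho != 0 ->
  (forall k i, lam k i + beta * z 0%N k i + y 0%N k i = 0) ->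
  (forall t k i, z t.+1 k i =
     (beta + rho)^-1 * (rho * (xb t.+1 k i - x0 t.+1 i) - lam k i - y t k i)) ->
  (forall t k i, y t.+1 k i = y t k i + rho * (x0 t.+1 i - xb t.+1 k i + z t.+1 k i)) ->
  forall t k i, y t k i = - lam k i - beta * z t k i.
Proof.
move=> brho_neq0 y_init z_upd y_upd; elim=> [|t IH] k i; first by have := y_init k i; lra.
by rewrite y_upd (dual_update_multiplier brho_neq0 (IH k i) (z_upd t k i)).
Qed.

Section AdmmStep.
Variables (R : realType) (G K : finType) (n0 : nat) (m : K -> nat).
Variables (pidx : G -> 'I_n0) (c : G -> R -> R) (delta : R).
Variables (c0s : vec R n0 -> R) (cks : forall k, vec R (m k) -> R).
Variables (X0 : set (vec R n0)) (Xk : forall k, set (vec R (m k + n0))).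
Variables (lam : K -> vec R n0) (beta rho : R).
Variables (x0 x0' : vec R n0) (xk xk' : forall k, vec R (m k)).
Variables (xb z y xb' z' y' : K -> vec R n0).
Arguments cks : clear implicits.
Arguments Xk : clear implicits.
Arguments xk : clear implicits.
Arguments xk' : clear implicits.

Local Notation F0 := (f0 pidx c delta c0s).
Local Notation L := (L_upper pidx c delta c0s cks lam beta rho).
Local Notation sqr_step := (\sum_k (vnorm (fun i => xb' k i - xb k i) ^+ 2
                                    + vnorm (fun i => z' k i - z k i) ^+ 2)).

Hypotheses (beta_gt0 : 0 < beta) (beta_lt_rho : beta < rho).
Hypothesis y_inv : forall k i, y k i = - lam k i - beta * z k i.
Hypothesis z'_def : forall k i,
  z' k i = (beta + rho)^-1 * (rho * (xb' k i - x0' i) - lam k i - y k i).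
Hypothesis y'_def : forall k i, y' k i = y k i + rho * (x0' i - xb' k i + z' k i).

Let rho_gt0 : 0 < rho := lt_trans beta_gt0 beta_lt_rho.
Let brho_neq0 : beta + rho != 0 := lt0r_neq0 (addr_gt0 beta_gt0 rho_gt0).
Let rho_neq0 : rho != 0 := lt0r_neq0 rho_gt0.

Lemma admm_multiplier_inv k i : y' k i = - lam k i - beta * z' k i.
Proof. by rewrite y'_def (dual_update_multiplier _ (y_inv k i) (z'_def k i)). Qed.

Lemma admm_step_descent gamma :
  F0 x0' + \sum_k (vdot (y k) x0' + rho / 2 * vnorm (fun i => x0' i - xb k i + z k i) ^+ 2)
  <= F0 x0 + \sum_k (vdot (y k) x0 + rho / 2 * vnorm (fun i => x0 i - xb k i + z k i) ^+ 2) ->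
  (forall k, fk K delta (cks k) (xk' k) - vdot (y k) (xb' k)
             + rho / 2 * vnorm (fun i => x0' i - xb' k i + z k i) ^+ 2
     <= fk K delta (cks k) (xk k) - vdot (y k) (xb k)
        + rho / 2 * vnorm (fun i => x0' i - xb k i + z k i) ^+ 2
        - gamma * beta * vnorm (fun i => xb' k i - xb k i) ^+ 2) ->
  L x0' xk' xb' z' y' + Num.min (gamma * beta) ((beta + rho) / 2 - beta ^+ 2 / rho) * sqr_step
  <= L x0 xk xb z y.
Proof.
move=> base_descent contingency_descent.
have x0_step : L x0' xk xb z y <= L x0 xk xb z y by exact: L_upper_base_step.
have xk_step : L x0' xk' xb' z y
    + \sum_k gamma * beta * vnorm (fun i => xb' k i - xb k i) ^+ 2 <= L x0' xk xb z y.
  exact: L_upper_contingency_step.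
have zy_step : L x0' xk' xb' z' y'
    + ((beta + rho) / 2 - beta ^+ 2 / rho) * \sum_k vnorm (fun i => z' k i - z k i) ^+ 2
    = L x0' xk' xb' z y.
  exact: L_upper_dual_step brho_neq0 rho_neq0 y_inv z'_def admm_multiplier_inv.
have : Num.min (gamma * beta) ((beta + rho) / 2 - beta ^+ 2 / rho) * sqr_step <=
    \sum_k gamma * beta * vnorm (fun i => xb' k i - xb k i) ^+ 2
    + ((beta + rho) / 2 - beta ^+ 2 / rho) * \sum_k vnorm (fun i => z' k i - z k i) ^+ 2.
  rewrite !mulr_sumr -big_split; apply: ler_sum => k _.
  by rewrite mulrDr lerD // ler_wpM2r ?sqr_ge0 // ge_min lexx ?orbT.
lra.
Qed.

Lemma admm_step_eps_stationary eps :
  sub0_stationary F0 X0 y xb z rho x0' ->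
  (forall k, subk_stationary (fk K delta (cks k)) (Xk k) (y k) (z k) x0' rho
               (xk' k) (xb' k)) ->
  1 <= rho -> 0 <= eps ->
  2 * rho ^+ 2 * #|K|%:R * sqr_step <= eps ^+ 2 ->
  eps_stationary pidx c delta c0s cks X0 Xk lam beta eps x0' xk' xb' z'.
Proof.
move=> stat0 statk rho_ge1 eps_ge0 small.
have dz_small k : rho ^+ 2 * vnorm (fun i => z' k i - z k i) ^+ 2 <= eps ^+ 2.
  have dz_le : vnorm (fun i => z' k i - z k i) ^+ 2 <= sqr_step.
    apply: le_trans (ler_sum_term k _) => [|j]; last by rewrite addr_ge0 ?sqr_ge0.
    by rewrite lerDr sqr_ge0.
  have K_ge1 : 1 <= #|K|%:R :> R by rewrite ler1n; apply/card_gt0P; exists k.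
  apply: le_trans (ler_wpM2l (sqr_ge0 rho) dz_le) (le_trans _ small).
  rewrite (_ : _ * sqr_step = (2 * #|K|%:R) * (rho ^+ 2 * sqr_step)); last by ring.
  have step_ge0 : 0 <= sqr_step := le_trans (sqr_ge0 _) dz_le.
  by rewrite ler_peMl ?mulr_ge0 ?sqr_ge0 //; lra.
exists y'; split.
- by move=> k i; rewrite admm_multiplier_inv; ring.
- exact (sub0_stationary_bound eps_ge0 y'_def stat0 small).
- by move=> k; exact (subk_stationary_bound eps_ge0 (y'_def k) (statk k) (dz_small k)).
- move=> k; have -> : (fun i => x0' i - xb' k i + z' k i)
                      = (fun i => beta / rho * (z k i - z' k i)).
    apply/funext => i.
    exact: dual_update_residual brho_neq0 rho_neq0 (y_inv k i) (z'_def k i).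
  apply: (scaled_increment_bound eps_ge0 _ (dz_small k)).
  apply: (le_trans (y := 1)); last exact: exprn_ege1.
  by rewrite exprn_ile1 ?divr_ge0 ?(ltW beta_gt0) ?(ltW rho_gt0) // ler_pdivrMr ?mul1r ?ltW.
Qed.

End AdmmStep.

Theorem theorem1 (R : realType) (G K : finType) (n0 : nat) (m : K -> nat)
  (pidx : G -> 'I_n0) (c : G -> R -> R) (pl pu : G -> R) (delta : R)
  (c0s : vec R n0 -> R) (cks : forall k, vec R (m k) -> R)
  (X0 : set (vec R n0)) (Xk : forall k, set (vec R (m k + n0)))
  (lam : K -> vec R n0) (beta tau rho eps gamma : R)
  (x0 : nat -> vec R n0) (xk : nat -> forall k, vec R (m k))
  (xb z y : nat -> K -> vec R n0) :
  (* standing assumptions on the model *)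
  (forall g, cvx_pwl_incr (c g)) ->
  (forall g, pl g <= pu g) ->
  0 <= delta <= 1 ->
  vclosed X0 -> (forall k, vclosed (Xk k)) ->
  (forall x, X0 x -> forall g, pl g <= x (pidx g) <= pu g) ->
  (forall x, X0 x -> 0 <= c0s x) ->
  (forall k x w, Xk k (vcat x w) -> 0 <= cks k x) ->
  (* parameters *)
  1 < tau -> 1 < beta -> rho = tau * beta -> 0 < eps ->
  (* initialization *)
  X0 (x0 0%N) -> (forall k, Xk k (vcat (xk 0%N k) (xb 0%N k))) ->
  (forall k i, lam k i + beta * z 0%N k i + y 0%N k i = 0) ->
  (* z- and y-updates *)
  (forall t k i, z t.+1 k i =
     (beta + rho)^-1 * (rho * (xb t.+1 k i - x0 t.+1 i) - lam k i - y t k i)) ->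
  (forall t k i, y t.+1 k i = y t k i + rho * (x0 t.+1 i - xb t.+1 k i + z t.+1 k i)) ->
  (* descent in base case update *)
  (forall t,
     sub0_stationary (f0 pidx c delta c0s) X0 (y t) (xb t) (z t) rho (x0 t.+1) /\
     f0 pidx c delta c0s (x0 t.+1)
       + \sum_(k : K) (vdot (y t k) (x0 t.+1)
                       + rho / 2 * vnorm (fun i => x0 t.+1 i - xb t k i + z t k i) ^+ 2)
     <= f0 pidx c delta c0s (x0 t)
       + \sum_(k : K) (vdot (y t k) (x0 t)
                       + rho / 2 * vnorm (fun i => x0 t i - xb t k i + z t k i) ^+ 2)) ->
  (* descent in contingency update *)
  0 < gamma ->
  (forall t k,
     subk_stationary (fk K delta (cks k)) (Xk k) (y t k) (z t k) (x0 t.+1) rho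
       (xk t.+1 k) (xb t.+1 k) /\
     fk K delta (cks k) (xk t.+1 k) - vdot (y t k) (xb t.+1 k)
       + rho / 2 * vnorm (fun i => x0 t.+1 i - xb t.+1 k i + z t k i) ^+ 2
     <= fk K delta (cks k) (xk t k) - vdot (y t k) (xb t k)
       + rho / 2 * vnorm (fun i => x0 t.+1 i - xb t k i + z t k i) ^+ 2
       - gamma * beta * vnorm (fun i => xb t.+1 k i - xb t k i) ^+ 2) ->
  (* conclusion: an eps-stationary iterate within the iteration bound *)
  exists t : nat,
    [/\ (1 <= t)%N,
        (t%:Z <= Num.max 1 (Num.ceil
           (2 * rho ^+ 2 * #|K|%:R
              * (L_upper pidx c delta c0s cks lam beta rho
                   (x0 0%N) (xk 0%N) (xb 0%N) (z 0%N) (y 0%N)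
                 - L_lower c pl pu lam beta)
            / Num.min (gamma * beta) ((beta + rho) / 2 - beta ^+ 2 / rho)
            / eps ^+ 2)))%R &
        eps_stationary pidx c delta c0s cks X0 Xk lam beta eps
          (x0 t) (xk t) (xb t) (z t)].
Proof.
move=> c_incr _ delta01 _ _ X0_bounds c0s_ge0 cks_ge0 tau_gt1 beta_gt1 rho_def eps_gt0
  X0_init Xk_init y_init z_upd y_upd base_descent gamma_gt0 contingency_descent.
have beta_gt0 : 0 < beta by lra.
have beta_lt_rho : beta < rho by rewrite rho_def -[X in X < _]mul1r ltr_pM2r.
have rho_gt0 : 0 < rho := lt_trans beta_gt0 beta_lt_rho.
have rho_ge1 : 1 <= rho by lra.
have y_inv := admm_multiplier_invariant (lt0r_neq0 (addr_gt0 beta_gt0 rho_gt0))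
  y_init z_upd y_upd.
have X0_iter t : X0 (x0 t).
  by case: t => // t; exact: sub0_stationary_feasible (base_descent t).1.
have Xk_iter t k : Xk k (vcat (xk t k) (xb t k)).
  by case: t => // t; exact: subk_stationary_feasible (contingency_descent t k).1.
pose Lt t := L_upper pidx c delta c0s cks lam beta rho (x0 t) (xk t) (xb t) (z t) (y t).
pose D t := \sum_k (vnorm (fun i => xb t.+1 k i - xb t k i) ^+ 2
                    + vnorm (fun i => z t.+1 k i - z t k i) ^+ 2).
have descent t :
    Lt t.+1 + Num.min (gamma * beta) ((beta + rho) / 2 - beta ^+ 2 / rho) * D t <= Lt t.
  exact (admm_step_descent beta_gt0 beta_lt_rho (y_inv t) (z_upd t) (y_upd t)
    (base_descent t).2 (fun k => (contingency_descent t k).2)).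
have lower t : L_lower c pl pu lam beta <= Lt t.
  apply: (L_lower_le_L_upper (xb t) (fun g => (c_incr g).2) (X0_bounds _ (X0_iter t))
    delta01 (c0s_ge0 _ (X0_iter t)) (fun k => cks_ge0 k _ _ (Xk_iter t k)) _ (y_inv t)).
  by rewrite beta_gt0 ltW.
rewrite -/(Lt 0%N); set Q := (X in Num.ceil X).
have [T [T_gt0 T_def Q_le_T]] := exists_nat_max1_ceil Q.
have A_ge0 : 0 <= 2 * rho ^+ 2 * #|K|%:R by rewrite 2?mulr_ge0 ?ler0n // sqr_ge0.
have [t t_lt small] := exists_small_decrease descent lower
  (descent_rate_gt0 gamma_gt0 beta_gt0 beta_lt_rho) A_ge0 eps_gt0 T_gt0 Q_le_T.
exists t.+1; split => //; first by rewrite -T_def lez_nat.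
exact (admm_step_eps_stationary beta_gt0 beta_lt_rho (y_inv t) (z_upd t) (y_upd t)
  (base_descent t).1 (fun k => (contingency_descent t k).1)
  rho_ge1 (ltW eps_gt0) small).
Qed.
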